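(* Let $p\ge q\ge 1$, real $c_{q+1},\dots,c_p$ (with $c_j=0$ for $j>p$), and \[ r(x) = 1 + \sum_{j=1}^{q}\frac{1}{j!}(-\mathrm{i}x)^j + \sum_{j=q+1}^{p} c_j(-\mathrm{i}x)^j . \] Define $S=(-1)^{q/2}\Big[\big(c_{q+1}-\tfrac{1}{(q+1)!}\big)-\big(c_{q+2}-\tfrac{1}{(q+2)!}\big)\Big]$ if $q$ is even and $S=(-1)^{(q+1)/2}\big(c_{q+1}-\tfrac{1}{(q+1)!}\big)$ if $q$ is odd. If $S<0$, then there exists $\eta_s>0$ such that $|r(x)|<1$ for all real $x$ with $0<x<\pi\eta_s$. If $S>0$, then there exists $\varepsilon>0$ such that $|r(x)|>1$ for all real $x$ with $0<x<\varepsilon$ (i.e. the scheme is unstable for arbitrarily small real $x$). *)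

From Stdlib Require Import Reals Arith.
Open Scope R_scope.

Record C := mkC { Cre : R; Cim : R }.

Definition RtoC (a : R) : C := mkC a 0.
Definition Cadd (z w : C) : C := mkC (Cre z + Cre w) (Cim z + Cim w).
Definition Cmul (z w : C) : C :=
  mkC (Cre z * Cre w - Cim z * Cim w) (Cre z * Cim w + Cim z * Cre w).
Fixpoint Cpow (z : C) (n : nat) : C :=
  match n with O => RtoC 1 | S m => Cmul z (Cpow z m) end.
Definition Cmod (z : C) : R := sqrt (Cre z ^ 2 + Cim z ^ 2).
Fixpoint Csum (f : nat -> C) (n : nat) : C :=
  match n with O => RtoC 0 | S m => Cadd (Csum f m) (f m) end.

Definition mix (x : R) : C := mkC 0 (- x).

Definition rstab (p q : nat) (c : nat -> R) (x : R) : C :=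
  Cadd (RtoC 1)
   (Cadd (Csum (fun k => Cmul (RtoC (/ INR (fact (k + 1)))) (Cpow (mix x) (k + 1))) q)
         (Csum (fun k => Cmul (RtoC (c (q + 1 + k)%nat)) (Cpow (mix x) (q + 1 + k))) (p - q))).

Definition cext (p : nat) (c : nat -> R) (j : nat) : R :=
  if Nat.leb j p then c j else 0.

Definition Sval (p q : nat) (c : nat -> R) : R :=
  if Nat.even q then
    (-1) ^ (q / 2) * ((cext p c (q + 1) - / INR (fact (q + 1)))
                      - (cext p c (q + 2) - / INR (fact (q + 2))))
  else
    (-1) ^ ((q + 1) / 2) * (cext p c (q + 1) - / INR (fact (q + 1))).

From Pilot Require Import Defs.
From Stdlib Require Import Reals Arith Lra Lia Psatz FunctionalExtensionality.
Open Scope R_scope.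

(* Write [E_n(x)] for the Taylor polynomial of degree [n] of [exp (-ix)], so that
   [r = E_(q+2) + D] with [D(x) = d1 (-ix)^(q+1) + d2 (-ix)^(q+2) + O(x^(q+3))],
   [d_j = c_(q+j) - 1/(q+j)!].  Since [E_n' = -i E_(n-1)], the derivative of [|E_n|^2]
   is [2 Re(i conj(E_n) (-ix)^n / n!) = O(x^n)], hence [|E_n|^2 = 1 + O(x^(n+1))].
   Expanding [|E + D|^2] with [E = 1 - ix + O(x^2)] gives
     [|r(x)|^2 - 1 = 2 d1 Im((-i)^q) x^(q+1) + 2 (d1 - d2) Re((-i)^q) x^(q+2) + O(x^(q+3))],
   and according to the parity of [q] exactly one of these coefficients survives: it is [2 S].
   So near [0+], [|r(x)|^2 - 1] has the sign of [S]. *)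

Lemma C_ext (z w : Defs.C) : Cre z = Cre w -> Cim z = Cim w -> z = w.
Proof. destruct z, w; simpl; intros -> ->; reflexivity. Qed.

Definition Cnorm2 (z : Defs.C) : R := Cre z ^ 2 + Cim z ^ 2.

Lemma Cnorm2_ge_0 z : 0 <= Cnorm2 z.
Proof. unfold Cnorm2. pose proof (pow2_ge_0 (Cre z)). pose proof (pow2_ge_0 (Cim z)). lra. Qed.

Lemma Cmod_lt_1 z : Cnorm2 z < 1 -> Cmod z < 1.
Proof.
  intro H. unfold Cmod. rewrite <- sqrt_1.
  apply sqrt_lt_1; [apply Cnorm2_ge_0 | lra | exact H].
Qed.

Lemma Cmod_gt_1 z : 1 < Cnorm2 z -> 1 < Cmod z.
Proof. intro H. unfold Cmod. rewrite <- sqrt_1. apply sqrt_lt_1; [lra | apply Cnorm2_ge_0 | exact H]. Qed.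

Definition nI : Defs.C := mkC 0 (-1).

Lemma Cpow_nI_S k : Cpow nI (S k) = mkC (Cim (Cpow nI k)) (- Cre (Cpow nI k)).
Proof. simpl. destruct (Cpow nI k) as [a b]. apply C_ext; simpl; ring. Qed.

Lemma Cpow_nI_even m : Cpow nI (2 * m) = RtoC ((-1) ^ m).
Proof.
  induction m as [|m IH]; [reflexivity|].
  replace (2 * S m)%nat with (S (S (2 * m))) by lia.
  rewrite !Cpow_nI_S, IH. apply C_ext; simpl; ring.
Qed.

Lemma Cpow_nI_odd m : Cpow nI (2 * m + 1) = mkC 0 (- (-1) ^ m).
Proof. rewrite Nat.add_1_r, Cpow_nI_S, Cpow_nI_even. reflexivity. Qed.

Definition mono (a : R) (k : nat) (x : R) : Defs.C := Cmul (RtoC a) (Cpow (mix x) k).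

Lemma Cpow_mix x k :
  Cpow (mix x) k = mkC (Cre (Cpow nI k) * x ^ k) (Cim (Cpow nI k) * x ^ k).
Proof.
  induction k as [|k IH]; [apply C_ext; simpl; ring|].
  change (Cpow (mix x) (S k)) with (Cmul (mix x) (Cpow (mix x) k)).
  rewrite IH, Cpow_nI_S. apply C_ext; simpl; ring.
Qed.

Lemma Cre_mono a k x : Cre (mono a k x) = a * Cre (Cpow nI k) * x ^ k.
Proof. unfold mono. rewrite Cpow_mix. simpl. ring. Qed.

Lemma Cim_mono a k x : Cim (mono a k x) = a * Cim (Cpow nI k) * x ^ k.
Proof. unfold mono. rewrite Cpow_mix. simpl. ring. Qed.

Lemma Csum_shift f n : Csum f (S n) = Cadd (f O) (Csum (fun k => f (S k)) n).
Proof.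
  induction n as [|n IH]; [apply C_ext; simpl; ring|].
  change (Csum f (S (S n))) with (Cadd (Csum f (S n)) (f (S n))).
  rewrite IH. apply C_ext; simpl; ring.
Qed.

Definition bigO (k : nat) (f : R -> R) : Prop :=
  exists K, 0 <= K /\ forall x, 0 < x <= 1 -> Rabs (f x) <= K * x ^ k.

Lemma pow_le_pow_of_le_1 x m j : 0 <= x <= 1 -> (m <= j)%nat -> x ^ j <= x ^ m.
Proof.
  intros Hx Hmj. replace j with (m + (j - m))%nat by lia. rewrite pow_add.
  assert (0 <= x ^ m) by (apply pow_le; lra).
  assert (x ^ (j - m) <= 1) by (rewrite <- (pow1 (j - m)); apply pow_incr; lra).
  nra.
Qed.

Lemma bigO_ext k f g : (forall x, 0 < x <= 1 -> f x = g x) -> bigO k f -> bigO k g.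
Proof. intros Hfg [K [HK Hb]]. exists K; split; [exact HK|]. intros x Hx. rewrite <- Hfg; auto. Qed.

Lemma bigO_weaken k l f : (k <= l)%nat -> bigO l f -> bigO k f.
Proof.
  intros Hkl [K [HK Hb]]. exists K; split; [exact HK|]. intros x Hx.
  apply (Rle_trans _ _ _ (Hb x Hx)), Rmult_le_compat_l; [exact HK|].
  apply pow_le_pow_of_le_1; [lra | exact Hkl].
Qed.

Lemma bigO_0 k : bigO k (fun _ => 0).
Proof. exists 0; split; [lra|]. intros x _. rewrite Rabs_R0. lra. Qed.

Lemma bigO_add k f g : bigO k f -> bigO k g -> bigO k (fun x => f x + g x).
Proof.
  intros [K1 [H1 B1]] [K2 [H2 B2]]. exists (K1 + K2); split; [lra|].
  intros x Hx. apply (Rle_trans _ _ _ (Rabs_triang _ _)).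
  specialize (B1 x Hx). specialize (B2 x Hx). lra.
Qed.

Lemma bigO_mul k l f g : bigO k f -> bigO l g -> bigO (k + l) (fun x => f x * g x).
Proof.
  intros [K1 [H1 B1]] [K2 [H2 B2]]. exists (K1 * K2); split; [nra|].
  intros x Hx. rewrite Rabs_mult, pow_add.
  replace (K1 * K2 * (x ^ k * x ^ l)) with ((K1 * x ^ k) * (K2 * x ^ l)) by ring.
  apply Rmult_le_compat; auto using Rabs_pos.
Qed.

Lemma bigO_pow m j : (m <= j)%nat -> bigO m (fun x => x ^ j).
Proof.
  intro Hmj. exists 1; split; [lra|]. intros x Hx.
  rewrite Rabs_right by (apply Rle_ge, pow_le; lra).
  rewrite Rmult_1_l. apply pow_le_pow_of_le_1; [lra | exact Hmj].
Qed.

Lemma bigO_scal k a f : bigO k f -> bigO k (fun x => a * f x).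
Proof.
  intros [K [HK Hb]]. exists (Rabs a * K); split; [apply Rmult_le_pos; auto using Rabs_pos|].
  intros x Hx. rewrite Rabs_mult, Rmult_assoc. apply Rmult_le_compat_l; auto using Rabs_pos.
Qed.

Lemma bigO_sub k f g : bigO k f -> bigO k g -> bigO k (fun x => f x - g x).
Proof.
  intros Hf Hg. apply (bigO_ext _ (fun x => f x + -1 * g x)); [intros; ring|].
  apply bigO_add; [exact Hf | apply bigO_scal, Hg].
Qed.

Lemma bigO_monomial m j a : (m <= j)%nat -> bigO m (fun x => a * x ^ j).
Proof. intro Hmj. apply bigO_scal, bigO_pow, Hmj. Qed.

Lemma bigO_of_derivative (h h' : R -> R) (n : nat) :
  h 0 = 0 -> (forall x, derivable_pt_lim h x (h' x)) -> bigO n h' -> bigO (S n) h.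
Proof.
  intros h0 Dh [K [HK Hb]]. exists K; split; [exact HK|]. intros x Hx.
  destruct (MVT_cor2 h h' 0 x) as [t [Ht Hti]]; [lra | intros; apply Dh |].
  rewrite h0, !Rminus_0_r in Ht. rewrite Ht, Rabs_mult, (Rabs_right x) by lra.
  assert (Hbt := Hb t ltac:(lra)).
  assert (t ^ n <= x ^ n) by (apply pow_incr; lra).
  assert (Rabs (h' t) <= K * x ^ n) by nra.
  simpl. nra.
Qed.

Lemma leading_term_dominates (F : R -> R) k a : a <> 0 ->
  bigO (S k) (fun x => F x - a * x ^ k) ->
  exists eps, 0 < eps /\ forall x, 0 < x < eps -> Rabs (F x - a * x ^ k) < Rabs a * x ^ k.
Proof.
  intros Ha [K [HK Hb]]. pose proof (Rabs_pos_lt a Ha) as Ha'.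
  exists (Rmin 1 (Rabs a / (K + 1))). split; [apply Rmin_pos; [lra | apply Rdiv_lt_0_compat; lra]|].
  intros x [Hx0 Hx].
  assert (Hx1 : x <= 1) by (pose proof (Rmin_l 1 (Rabs a / (K + 1))); lra).
  assert (HxK : x * (K + 1) < Rabs a).
  { assert (Hxa : x < Rabs a / (K + 1)) by (pose proof (Rmin_r 1 (Rabs a / (K + 1))); lra).
    apply (Rmult_lt_compat_r (K + 1)) in Hxa; [|lra].
    unfold Rdiv in Hxa. rewrite Rmult_assoc, Rinv_l, Rmult_1_r in Hxa by lra. exact Hxa. }
  assert (0 < x ^ k) by (apply pow_lt; lra).
  apply (Rle_lt_trans _ _ _ (Hb x (conj Hx0 Hx1))). simpl. nra.
Qed.

Lemma sign_of_leading_term (F : R -> R) k a :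
  bigO (S k) (fun x => F x - a * x ^ k) ->
  (0 < a -> exists eps, 0 < eps /\ forall x, 0 < x < eps -> 0 < F x) /\
  (a < 0 -> exists eps, 0 < eps /\ forall x, 0 < x < eps -> F x < 0).
Proof.
  intro HF. split; intro Ha;
    destruct (leading_term_dominates F k a ltac:(lra) HF) as [eps [Heps Hdom]];
    exists eps; split; auto; intros x Hx; specialize (Hdom x Hx);
    assert (0 < x ^ k) by (apply pow_lt; lra).
  - rewrite (Rabs_right a) in Hdom by lra. apply Rabs_def2 in Hdom. nra.
  - rewrite (Rabs_left a) in Hdom by lra. apply Rabs_def2 in Hdom. nra.
Qed.

Definition bigOC (k : nat) (f : R -> Defs.C) : Prop :=
  bigO k (fun x => Cre (f x)) /\ bigO k (fun x => Cim (f x)).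

Lemma bigOC_mono m k a : (m <= k)%nat -> bigOC m (mono a k).
Proof.
  intro Hmk. split.
  - apply (bigO_ext _ (fun x => (a * Cre (Cpow nI k)) * x ^ k)); [intros; symmetry; apply Cre_mono|].
    apply bigO_monomial, Hmk.
  - apply (bigO_ext _ (fun x => (a * Cim (Cpow nI k)) * x ^ k)); [intros; symmetry; apply Cim_mono|].
    apply bigO_monomial, Hmk.
Qed.

Lemma bigOC_Csum m (F : nat -> R -> Defs.C) n :
  (forall k, bigOC m (F k)) -> bigOC m (fun x => Csum (fun k => F k x) n).
Proof.
  intro HF. induction n as [|n [IHre IHim]]; [split; apply bigO_0|].
  destruct (HF n) as [Hre Him]. split; simpl; apply bigO_add; assumption.
Qed.

Lemma bigO_Cnorm2 k f : bigOC k f -> bigO (k + k) (fun x => Cnorm2 (f x)).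
Proof.
  intros [Hre Him]. apply (bigO_ext _ (fun x => Cre (f x) * Cre (f x) + Cim (f x) * Cim (f x)));
    [intros; unfold Cnorm2; ring|].
  apply bigO_add; apply bigO_mul; assumption.
Qed.

(* [expT n x] is the Taylor polynomial of degree [n - 1] of [exp (-ix)]. *)
Definition expT (n : nat) (x : R) : Defs.C := Csum (fun k => mono (/ INR (fact k)) k x) n.

Lemma expT_S n x : expT (S n) x = Cadd (expT n x) (mono (/ INR (fact n)) n x).
Proof. reflexivity. Qed.

Lemma expT_1 x : expT 1 x = RtoC 1.
Proof. apply C_ext; simpl; field. Qed.

Lemma expT_at_0 n : expT (S n) 0 = RtoC 1.
Proof.
  induction n as [|n IH]; [apply expT_1|].
  rewrite expT_S, IH. apply C_ext; cbn [Cre Cim Cadd RtoC];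
    rewrite ?Cre_mono, ?Cim_mono, pow_i by lia; ring.
Qed.

Lemma bigOC_expT n : bigOC 0 (expT n).
Proof. apply bigOC_Csum. intro k. apply bigOC_mono. lia. Qed.

Lemma expT_linear_part m :
  bigO 2 (fun x => Cre (expT (S (S m)) x) - 1) /\ bigO 2 (fun x => Cim (expT (S (S m)) x) + x).
Proof.
  induction m as [|m [IHre IHim]].
  - split; apply (bigO_ext _ (fun _ => 0)); try apply bigO_0;
      intros x _; simpl; field.
  - destruct (bigOC_mono 2 (S (S m)) (/ INR (fact (S (S m)))) ltac:(lia)) as [Hre Him].
    split.
    + apply (bigO_ext _ (fun x => (Cre (expT (S (S m)) x) - 1) + Cre (mono (/ INR (fact (S (S m)))) (S (S m)) x)));
        [intros x _; rewrite (expT_S (S (S m))); simpl; ring | apply bigO_add; assumption].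
    + apply (bigO_ext _ (fun x => (Cim (expT (S (S m)) x) + x) + Cim (mono (/ INR (fact (S (S m)))) (S (S m)) x)));
        [intros x _; rewrite (expT_S (S (S m))); simpl; ring | apply bigO_add; assumption].
Qed.

Lemma derivable_pt_lim_monomial b k x :
  derivable_pt_lim (fun y => b * y ^ S k) x (b * INR (S k) * x ^ k).
Proof.
  replace (b * INR (S k) * x ^ k) with (b * (INR (S k) * x ^ pred (S k))) by (simpl; ring).
  apply (derivable_pt_lim_scal (fun y => y ^ S k)), derivable_pt_lim_pow.
Qed.

Lemma derivable_Cre_mono a k x :
  derivable_pt_lim (fun y => Cre (mono a (S k) y)) x (Cim (mono (a * INR (S k)) k x)).
Proof.
  replace (fun y => Cre (mono a (S k) y)) with (fun y => a * Cim (Cpow nI k) * y ^ S k)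
    by (extensionality y; rewrite Cre_mono, Cpow_nI_S; reflexivity).
  rewrite Cim_mono. replace (a * INR (S k) * Cim (Cpow nI k) * x ^ k)
    with (a * Cim (Cpow nI k) * INR (S k) * x ^ k) by ring.
  apply derivable_pt_lim_monomial.
Qed.

Lemma derivable_Cim_mono a k x :
  derivable_pt_lim (fun y => Cim (mono a (S k) y)) x (- Cre (mono (a * INR (S k)) k x)).
Proof.
  replace (fun y => Cim (mono a (S k) y)) with (fun y => - a * Cre (Cpow nI k) * y ^ S k)
    by (extensionality y; rewrite Cim_mono, Cpow_nI_S; simpl; ring).
  rewrite Cre_mono. replace (- (a * INR (S k) * Cre (Cpow nI k) * x ^ k))
    with (- a * Cre (Cpow nI k) * INR (S k) * x ^ k) by ring.
  apply derivable_pt_lim_monomial.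
Qed.

Lemma inv_fact_S_mul k : / INR (fact (S k)) * INR (S k) = / INR (fact k).
Proof.
  rewrite fact_simpl, mult_INR. field.
  split; [apply INR_fact_neq_0 | apply not_0_INR; lia].
Qed.

(* Real and imaginary parts of [E_n' = -i E_(n-1)]. *)
Lemma derivable_expT n x :
  derivable_pt_lim (fun y => Cre (expT (S n) y)) x (Cim (expT n x)) /\
  derivable_pt_lim (fun y => Cim (expT (S n) y)) x (- Cre (expT n x)).
Proof.
  induction n as [|n [IHre IHim]].
  - replace (fun y => Cre (expT 1 y)) with (fun _ : R => 1)
      by (extensionality y; rewrite expT_1; reflexivity).
    replace (fun y => Cim (expT 1 y)) with (fun _ : R => 0)
      by (extensionality y; rewrite expT_1; reflexivity).
    simpl. rewrite Ropp_0. split; apply derivable_pt_lim_const.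
  - pose proof (derivable_Cre_mono (/ INR (fact (S n))) n x) as Dre.
    pose proof (derivable_Cim_mono (/ INR (fact (S n))) n x) as Dim.
    rewrite inv_fact_S_mul in Dre, Dim.
    rewrite (expT_S n x). split.
    + change (fun y => Cre (expT (S (S n)) y))
        with (fun y => Cre (expT (S n) y) + Cre (mono (/ INR (fact (S n))) (S n) y)).
      apply (derivable_pt_lim_plus _ _ x _ _ IHre Dre).
    + change (fun y => Cim (expT (S (S n)) y))
        with (fun y => Cim (expT (S n) y) + Cim (mono (/ INR (fact (S n))) (S n) y)).
      cbn [Cre Cadd]. rewrite Ropp_plus_distr.
      apply (derivable_pt_lim_plus _ _ x _ _ IHim Dim).
Qed.

Lemma derivable_pt_lim_Cnorm2 (f : R -> Defs.C) x a b :
  derivable_pt_lim (fun y => Cre (f y)) x a -> derivable_pt_lim (fun y => Cim (f y)) x b ->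
  derivable_pt_lim (fun y => Cnorm2 (f y)) x (2 * (Cre (f x) * a + Cim (f x) * b)).
Proof.
  intros Ha Hb.
  replace (fun y => Cnorm2 (f y)) with (fun y => Cre (f y) * Cre (f y) + Cim (f y) * Cim (f y))
    by (extensionality y; unfold Cnorm2; ring).
  replace (2 * (Cre (f x) * a + Cim (f x) * b))
    with ((a * Cre (f x) + Cre (f x) * a) + (b * Cim (f x) + Cim (f x) * b)) by ring.
  exact (derivable_pt_lim_plus _ _ x _ _
           (derivable_pt_lim_mult _ _ x _ _ Ha Ha) (derivable_pt_lim_mult _ _ x _ _ Hb Hb)).
Qed.

Lemma bigO_Cnorm2_expT n : bigO (S n) (fun x => Cnorm2 (expT (S n) x) - 1).
Proof.
  set (t := mono (/ INR (fact n)) n).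
  apply (bigO_of_derivative _ (fun x => 2 * (Cre (t x) * Cim (expT n x) - Cim (t x) * Cre (expT n x)))).
  - rewrite expT_at_0. unfold Cnorm2. simpl. ring.
  - intro x. destruct (derivable_expT n x) as [Dre Dim].
    replace (2 * (Cre (t x) * Cim (expT n x) - Cim (t x) * Cre (expT n x)))
      with (2 * (Cre (expT (S n) x) * Cim (expT n x) + Cim (expT (S n) x) * - Cre (expT n x)) - 0)
      by (rewrite expT_S; simpl; ring).
    apply (derivable_pt_lim_minus _ _ x _ _ (derivable_pt_lim_Cnorm2 _ x _ _ Dre Dim)
             (derivable_pt_lim_const 1 x)).
  - destruct (bigOC_mono n n (/ INR (fact n)) (le_n n)) as [Tre Tim].
    destruct (bigOC_expT n) as [Ere Eim].
    assert (Hmul : forall f g, bigO n f -> bigO 0 g -> bigO n (fun x => f x * g x)).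
    { intros f g Hf Hg. rewrite <- (Nat.add_0_r n) at 1. apply bigO_mul; assumption. }
    apply bigO_scal, bigO_sub; apply Hmul; assumption.
Qed.

Definition rstab_tail (p q : nat) (c : nat -> R) (x : R) : Defs.C :=
  Csum (fun k => mono (c (q + 1 + k)%nat) (q + 1 + k) x) (p - q).

Lemma rstab_split p q c x : rstab p q c x = Cadd (expT (S q) x) (rstab_tail p q c x).
Proof.
  change (rstab p q c x) with (Cadd (RtoC 1)
    (Cadd (Csum (fun k => mono (/ INR (fact (k + 1))) (k + 1) x) q) (rstab_tail p q c x))).
  unfold expT. rewrite Csum_shift.
  replace (fun k => mono (/ INR (fact (k + 1))) (k + 1) x)
    with (fun k => mono (/ INR (fact (S k))) (S k) x)
    by (extensionality k; rewrite Nat.add_1_r; reflexivity).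
  apply C_ext; cbn [Cre Cim Cadd RtoC]; rewrite ?Cre_mono, ?Cim_mono; simpl; field.
Qed.

Lemma cext_in p c j : (j <= p)%nat -> cext p c j = c j.
Proof. intro H. unfold cext. apply Nat.leb_le in H. rewrite H. reflexivity. Qed.

Lemma cext_out p c j : (p < j)%nat -> cext p c j = 0.
Proof. intro H. unfold cext. apply Nat.leb_gt in H. rewrite H. reflexivity. Qed.

Lemma rstab_tail_expansion p q c : exists e : R -> Defs.C, bigOC (S (S (S q))) e /\
  forall x, rstab_tail p q c x =
    Cadd (Cadd (mono (cext p c (S q)) (S q) x) (mono (cext p c (S (S q))) (S (S q)) x)) (e x).
Proof.
  unfold rstab_tail. replace (q + 1)%nat with (S q) by lia.
  destruct (p - q)%nat as [|[|n]] eqn:Hpq.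
  - exists (fun _ => RtoC 0). split; [split; apply bigO_0|]. intro x.
    rewrite !cext_out by lia.
    apply C_ext; cbn [Cre Cim Cadd Csum RtoC]; rewrite ?Cre_mono, ?Cim_mono; ring.
  - exists (fun _ => RtoC 0). split; [split; apply bigO_0|]. intro x.
    rewrite cext_in, (cext_out p c (S (S q))) by lia.
    apply C_ext; cbn [Cre Cim Cadd Csum RtoC]; rewrite ?Cre_mono, ?Cim_mono, ?Nat.add_0_r; ring.
  - exists (fun x => Csum (fun k => mono (c (S q + S (S k))%nat) (S q + S (S k)) x) n). split.
    + apply bigOC_Csum. intro k. apply bigOC_mono. lia.
    + intro x. rewrite !cext_in by lia. rewrite !Csum_shift.
      replace (S q + 0)%nat with (S q) by lia. replace (S q + 1)%nat with (S (S q)) by lia.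
      apply C_ext; cbn [Cre Cim Cadd]; ring.
Qed.

Definition coef_defect (p : nat) (c : nat -> R) (j : nat) : R := cext p c j - / INR (fact j).

Lemma rstab_expansion p q c : exists e : R -> Defs.C, bigOC (S (S (S q))) e /\
  forall x, rstab p q c x = Cadd (expT (S (S (S q))) x)
    (Cadd (Cadd (mono (coef_defect p c (S q)) (S q) x)
                (mono (coef_defect p c (S (S q))) (S (S q)) x)) (e x)).
Proof.
  destruct (rstab_tail_expansion p q c) as [e [He Htail]].
  exists e. split; [exact He|]. intro x.
  rewrite rstab_split, Htail, (expT_S (S (S q))), (expT_S (S q)).
  unfold coef_defect.
  apply C_ext; cbn [Cre Cim Cadd]; rewrite !Cre_mono || rewrite !Cim_mono; ring.
Qed.

Lemma Cnorm2_rstab_expansion p q c : (1 <= q)%nat ->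
  bigO (S (S (S q))) (fun x => Cnorm2 (rstab p q c x) - 1
    - 2 * coef_defect p c (S q) * Cim (Cpow nI q) * x ^ S q
    - 2 * (coef_defect p c (S q) - coef_defect p c (S (S q))) * Cre (Cpow nI q) * x ^ S (S q)).
Proof.
  intro hq.
  destruct (rstab_expansion p q c) as [e [[He_re He_im] Hr]].
  set (d1 := coef_defect p c (S q)). set (d2 := coef_defect p c (S (S q))).
  set (E := expT (S (S (S q)))).
  set (D := fun x => Cadd (Cadd (mono d1 (S q) x) (mono d2 (S (S q)) x)) (e x)).
  assert (HD : bigOC (S q) D).
  { split; apply bigO_add; try apply bigO_add;
      solve [ apply bigOC_mono; lia
            | eapply bigO_weaken; [|eassumption]; lia ]. }
  destruct HD as [HD_re HD_im].
  destruct (expT_linear_part (S q)) as [HE_re HE_im].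
  (* |E + D|^2 - 1 = (|E|^2 - 1) + 2 (Re D - x Im D) + 2 ((Re E - 1) Re D + (Im E + x) Im D) + |D|^2 *)
  apply (bigO_ext _ (fun x => (Cnorm2 (E x) - 1)
      + 2 * (Cre (e x) - x * Cim (e x) + d2 * Cim (Cpow nI q) * x ^ S (S (S q)))
      + 2 * ((Cre (E x) - 1) * Cre (D x) + (Cim (E x) + x) * Cim (D x))
      + Cnorm2 (D x))).
  { intros x _. rewrite Hr. unfold D, Cnorm2. cbn [Cre Cim Cadd].
    unfold E, d1, d2. rewrite !Cre_mono, !Cim_mono, !Cpow_nI_S. cbn [Cre Cim pow]. ring. }
  apply bigO_add; [apply bigO_add; [apply bigO_add|]|].
  - apply bigO_Cnorm2_expT.
  - apply bigO_scal, bigO_add; [apply bigO_sub|].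
    + exact He_re.
    + apply (bigO_weaken _ (1 + S (S (S q)))); [lia|].
      apply bigO_mul; [apply (bigO_ext _ (fun x => 1 * x ^ 1)); [intros; simpl; ring|] |];
        [apply bigO_monomial; lia | exact He_im].
    + apply bigO_monomial. lia.
  - apply bigO_scal, bigO_add; apply (bigO_mul 2 (S q)); assumption.
  - apply (bigO_weaken _ (S q + S q)); [lia|]. apply bigO_Cnorm2. split; assumption.
Qed.

Lemma Cnorm2_rstab_leading_term p q c : (1 <= q)%nat -> exists k,
  bigO (S k) (fun x => (Cnorm2 (rstab p q c x) - 1) - 2 * Sval p q c * x ^ k).
Proof.
  intro hq. pose proof (Cnorm2_rstab_expansion p q c hq) as Hexp.
  unfold Sval. rewrite Nat.add_1_r. replace (q + 2)%nat with (S (S q)) by lia.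
  fold (coef_defect p c (S q)) (coef_defect p c (S (S q))).
  destruct (Nat.Even_or_Odd q) as [[m ->] | [m ->]].
  - rewrite Nat.even_even, Cpow_nI_even in *.
    replace (2 * m / 2)%nat with m by (rewrite Nat.mul_comm, Nat.div_mul; lia).
    exists (S (S (2 * m))).
    eapply bigO_ext; [|exact Hexp]. intros x _. cbv beta. cbn [Cre Cim RtoC]. ring.
  - rewrite Nat.even_odd, Cpow_nI_odd in *.
    replace (S (2 * m + 1) / 2)%nat with (S m)
      by (replace (S (2 * m + 1)) with (S m * 2)%nat by lia; rewrite Nat.div_mul; lia).
    exists (S (2 * m + 1)).
    apply (bigO_weaken _ (S (S (S (2 * m + 1))))); [lia|].
    eapply bigO_ext; [|exact Hexp]. intros x _. cbv beta. cbn [Cre Cim RtoC pow]. ring.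
Qed.

Theorem mainTheorem2 (p q : nat) (c : nat -> R) (hq : (1 <= q)%nat) (hpq : (q <= p)%nat) :
  (Sval p q c < 0 ->
     exists eta_s : R, 0 < eta_s /\
       forall x : R, 0 < x < PI * eta_s -> Cmod (rstab p q c x) < 1) /\
  (Sval p q c > 0 ->
     exists eps : R, 0 < eps /\
       forall x : R, 0 < x < eps -> Cmod (rstab p q c x) > 1).
Proof.
  destruct (Cnorm2_rstab_leading_term p q c hq) as [k Hk].
  destruct (sign_of_leading_term _ _ _ Hk) as [Hpos Hneg].
  split; intro HS.
  - destruct (Hneg ltac:(lra)) as [eps [Heps Hlt]].
    exists (eps / PI). split; [apply Rdiv_lt_0_compat; [exact Heps | apply PI_RGT_0]|].
    intros x Hx. rewrite Rmult_div_assoc, Rmult_div_r in Hx by apply PI_neq0.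
    apply Cmod_lt_1. specialize (Hlt x Hx). lra.
  - destruct (Hpos ltac:(lra)) as [eps [Heps Hgt]].
    exists eps. split; [exact Heps|]. intros x Hx.
    apply Cmod_gt_1. specialize (Hgt x Hx). lra.
Qed.
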